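(* Let $1\le k\le r-1$, let $x\in\mathcal{K}_k(c,H)$, and let $q_{k-1}\in\mathbb{R}^n$ satisfy $q_{k-1} /\!/ \hat q_{k-1}$. Then the denominator $\hat g_k^T H\hat g_k\, q_{k-1}^T H q_{k-1}-(\hat g_k^T H q_{k-1})^2$ is nonzero and $$p^N_k(x)=p^N_{k-1}(x)+\beta_k\hat g_k+\gamma_{k-1}q_{k-1},$$ where $$\beta_k=-\frac{\hat g_k^T\hat g_k\; q_{k-1}^THq_{k-1}}{\hat g_k^TH\hat g_k\; q_{k-1}^THq_{k-1}-(\hat g_k^THq_{k-1})^2},\qquad \gamma_{k-1}=\frac{\hat g_k^T\hat g_k\; q_{k-1}^TH\hat g_k}{\hat g_k^TH\hat g_k\; q_{k-1}^THq_{k-1}-(\hat g_k^THq_{k-1})^2}.$$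
   Context: Let $H\in\mathbb{R}^{n\times n}$ be symmetric positive definite, $c\in\mathbb{R}^n$, $f(x)=\tfrac12 x^THx+c^Tx$ and $g(x)=Hx+c$ its gradient. For $k\ge 1$ let $\mathcal{K}_k(c,H)=\mathrm{span}\{c,Hc,\dots,H^{k-1}c\}$, and $\mathcal{K}_0(c,H)=\{0\}$. Assume $c\neq 0$ and let $r\ge1$ be the smallest integer with $\mathcal{K}_r(c,H)=\mathcal{K}_{r+1}(c,H)$. For $k\ge 0$ let $\hat x_k$ be the (unique) minimizer of $f$ over $\mathcal{K}_k(c,H)$, $\hat g_k=g(\hat x_k)$, and $\hat q_k=\hat x_{k+1}-\hat x_k$ (so $\hat x_r=-H^{-1}c$ and $\hat q_k\ne 0$ for $k\le r-1$). For $x\in\mathcal{K}_k(c,H)$, the $(k-1)$-th subspace Newton step is $p^N_{k-1}(x)=\hat x_k-x$; likewise $p^N_k(x)=\hat x_{k+1}-x$. Two vectors are parallel, $p /\!/ p'$, if both are nonzero and $p=tp'$ for some scalar $t\neq 0$. *)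

From mathcomp Require Import all_boot all_order all_algebra.
Set Implicit Arguments. Unset Strict Implicit. Unset Printing Implicit Defensive.
Import Order.TTheory GRing.Theory Num.Theory.
Local Open Scope ring_scope.

Section Defs.
Variables (R : realFieldType) (n : nat).

Definition dotv (u v : 'cV[R]_n) : R := (u^T *m v) 0 0.

Definition fobj (H : 'M[R]_n) (c x : 'cV[R]_n) : R :=
  2^-1 * dotv x (H *m x) + dotv c x.

Definition gradf (H : 'M[R]_n) (c x : 'cV[R]_n) : 'cV[R]_n := H *m x + c.

Definition krylov (H : 'M[R]_n) (c : 'cV[R]_n) (k : nat) (x : 'cV[R]_n) : Prop :=
  exists a : 'I_k -> R, x = \sum_(i < k) a i *: iter i (mulmx H) c.

Definition krylov_eq (H : 'M[R]_n) (c : 'cV[R]_n) (k m : nat) : Prop :=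
  forall x, krylov H c k x <-> krylov H c m x.

Definition krylov_r (H : 'M[R]_n) (c : 'cV[R]_n) (r : nat) : Prop :=
  [/\ (1 <= r)%N, krylov_eq H c r r.+1 &
      forall m, (1 <= m)%N -> (m < r)%N -> ~ krylov_eq H c m m.+1].

Definition krylov_min (H : 'M[R]_n) (c : 'cV[R]_n) (k : nat) (x : 'cV[R]_n) : Prop :=
  krylov H c k x /\ forall y, krylov H c k y -> fobj H c x <= fobj H c y.

Definition parallel (p p' : 'cV[R]_n) : Prop :=
  [/\ p != 0, p' != 0 & exists t : R, t != 0 /\ p = t *: p'].

End Defs.

From mathcomp Require Import all_boot all_order all_algebra.
From mathcomp Require Import ring zify.
Set Implicit Arguments. Unset Strict Implicit. Unset Printing Implicit Defensive.
Import Order.TTheory GRing.Theory Num.Theory.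
Local Open Scope ring_scope.

(* Each Krylov minimizer has its gradient orthogonal to its Krylov space.
   The point y = x_k + beta g_k + gamma q_{k-1} lies in K_{k+1}, and its
   gradient g_k + beta H g_k + gamma H q_{k-1} is orthogonal to K_{k-1}
   (because H q_{k-1} is a multiple of g_k - g_{k-1}), while beta and gamma
   are exactly the solution of the 2x2 system making it orthogonal to q_{k-1}
   and g_k as well.  Since q_{k-1} and g_k each add one dimension,
   K_{k+1} = K_{k-1} + span(q_{k-1}, g_k), so y satisfies the optimality
   conditions on K_{k+1} and, by strict convexity, y = x_{k+1}.  The 2x2
   determinant is positive by Cauchy-Schwarz for the H-inner product, since
   g_k and q_{k-1} are orthogonal and nonzero; g_k <> 0 because a zero
   gradient at x_k would make the Krylov sequence stall before step r. *)

Section DotProduct.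
Variables (R : realFieldType) (n : nat).
Implicit Types (u v w : 'cV[R]_n) (H : 'M[R]_n).

Lemma dotvE u v : dotv u v = \sum_i u i 0 * v i 0.
Proof. by rewrite /dotv mxE; apply: eq_bigr => i _; rewrite mxE. Qed.

Lemma dotvC u v : dotv u v = dotv v u.
Proof. by rewrite !dotvE; apply: eq_bigr => i _; rewrite mulrC. Qed.

Lemma dotvDl u v w : dotv (u + v) w = dotv u w + dotv v w.
Proof. by rewrite !dotvE -big_split; apply: eq_bigr => i _; rewrite mxE mulrDl. Qed.

Lemma dotvZl a u w : dotv (a *: u) w = a * dotv u w.
Proof. by rewrite !dotvE mulr_sumr; apply: eq_bigr => i _; rewrite mxE mulrA. Qed.

Lemma dotvNl u w : dotv (- u) w = - dotv u w.
Proof. by rewrite -scaleN1r dotvZl mulN1r. Qed.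

Lemma dotvBl u v w : dotv (u - v) w = dotv u w - dotv v w.
Proof. by rewrite dotvDl dotvNl. Qed.

Lemma dotvDr u v w : dotv w (u + v) = dotv w u + dotv w v.
Proof. by rewrite !(dotvC w) dotvDl. Qed.

Lemma dotvZr a u w : dotv w (a *: u) = a * dotv w u.
Proof. by rewrite !(dotvC w) dotvZl. Qed.

Lemma dotvBr u v w : dotv w (u - v) = dotv w u - dotv w v.
Proof. by rewrite !(dotvC w) dotvBl. Qed.

Lemma dotv0r w : dotv w 0 = 0.
Proof. by rewrite dotvE big1 // => i _; rewrite mxE mulr0. Qed.

Lemma dotv_mulmx_sym H u v : H^T = H -> dotv u (H *m v) = dotv (H *m u) v.
Proof. by move=> symH; rewrite /dotv trmx_mul symH mulmxA. Qed.

Lemma dotvv_eq0 v : dotv v v = 0 -> v = 0.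
Proof.
rewrite dotvE => /psumr_eq0P sq0; apply/matrixP => i j; rewrite (ord1 j) mxE.
have /eqP := sq0 (fun k _ => sqr_ge0 (v k 0)) i isT.
by rewrite mulf_eq0 orbb => /eqP.
Qed.

End DotProduct.

Section KrylovSpan.
Variables (R : realFieldType) (n : nat) (H : 'M[R]_n) (c : 'cV[R]_n).

Local Notation kv i := (iter i (mulmx H) c).

Definition kspan (k : nat) (x : 'cV[R]_n) : Prop :=
  exists a : nat -> R, x = \sum_(i < k) a i *: kv i.

Lemma krylovE k x : krylov H c k x <-> kspan k x.
Proof.
split=> [[a ->]|[a ->]]; last by exists (fun i => a (val i)).
exists (fun m => if insub m is Some i then a i else 0).
by apply: eq_bigr => i _; rewrite valK.
Qed.

Lemma kspan0 k : kspan k 0.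
Proof. by exists (fun _ => 0); rewrite big1 // => i _; rewrite scale0r. Qed.

Lemma kspanD k u v : kspan k u -> kspan k v -> kspan k (u + v).
Proof.
case=> a -> [b ->]; exists (fun m => a m + b m).
by rewrite -big_split; apply: eq_bigr => i _; rewrite scalerDl.
Qed.

Lemma kspanZ k t u : kspan k u -> kspan k (t *: u).
Proof.
case=> a ->; exists (fun m => t * a m).
by rewrite scaler_sumr; apply: eq_bigr => i _; rewrite scalerA.
Qed.

Lemma kspanB k u v : kspan k u -> kspan k v -> kspan k (u - v).
Proof. by move=> ku kv'; rewrite -scaleN1r; apply/kspanD/kspanZ. Qed.

Lemma kspanSP k v :
  kspan k.+1 v <-> exists u a, kspan k u /\ v = u + a *: kv k.
Proof.
split=> [[a ->]|[u [al [[a ->] ->]]]].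
  by exists (\sum_(i < k) a i *: kv i), (a k); split; [exists a|rewrite big_ord_recr].
exists (fun m => if m == k then al else a m).
rewrite big_ord_recr /= eqxx; congr (_ + _).
by apply: eq_bigr => i _; rewrite (ltn_eqF (ltn_ord i)).
Qed.

Lemma kspanS k u : kspan k u -> kspan k.+1 u.
Proof. by move=> ku; apply/kspanSP; exists u, 0; rewrite scale0r addr0. Qed.

Lemma kspan_leq i j u : (i <= j)%N -> kspan i u -> kspan j u.
Proof.
move=> /subnK <-; elim: (j - i)%N => [|m ih] ku //.
by rewrite addSn; apply/kspanS/ih.
Qed.

Lemma kspan_kv i k : (i < k)%N -> kspan k (kv i).
Proof.
move=> lt_ik; apply: (kspan_leq lt_ik); apply/kspanSP.
by exists 0, 1; rewrite add0r scale1r; split; first exact: kspan0.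
Qed.

Lemma kspan_mulmx k v : kspan k v -> kspan k.+1 (H *m v).
Proof.
case=> a ->; exists (fun m => if m is m'.+1 then a m' else 0).
rewrite big_ord_recl /= scale0r add0r mulmx_sumr.
by apply: eq_bigr => i _; rewrite scalemxAr.
Qed.

Lemma gradfD x v : gradf H c (x + v) = gradf H c x + H *m v.
Proof. by rewrite /gradf mulmxDr addrAC. Qed.

Lemma kspan_gradf k x : kspan k x -> kspan k.+1 (gradf H c x).
Proof. by move=> kx; apply/kspanD; [apply: kspan_mulmx|exact: (@kspan_kv 0 k.+1)]. Qed.

Lemma kspanS_span k v w : kspan k.+1 v -> ~ kspan k v -> kspan k.+1 w ->
  exists u t, kspan k u /\ w = u + t *: v.
Proof.
move=> /kspanSP [u0 [a [ku0 ->]]] v_out /kspanSP [u1 [b [ku1 ->]]].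
have a_neq0 : a != 0.
  by apply: contra_notN v_out => /eqP ->; rewrite scale0r addr0.
exists (u1 - (b / a) *: u0), (b / a); split; first exact/kspanB/kspanZ.
by rewrite scalerDr scalerA divfK // addrA subrK.
Qed.

Lemma orth_kspanS z k v : kspan k.+1 v -> ~ kspan k v ->
  (forall u, kspan k u -> dotv z u = 0) -> dotv z v = 0 ->
  forall w, kspan k.+1 w -> dotv z w = 0.
Proof.
move=> kv_in v_out z_orth zv w /(kspanS_span kv_in v_out) [u [t [ku ->]]].
by rewrite dotvDr dotvZr zv mulr0 addr0 z_orth.
Qed.

Lemma krylov_eq_of_kv k : kspan k (kv k) -> krylov_eq H c k k.+1.
Proof.
move=> kv_in x; rewrite !krylovE; split; first exact: kspanS.
by move=> /kspanSP [u [a [ku ->]]]; apply/kspanD/kspanZ.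
Qed.

Lemma krylov_eq_of_gradf_eq0 j x : c != 0 -> kspan j x -> gradf H c x = 0 ->
  exists d, [/\ (1 <= d)%N, (d <= j)%N & krylov_eq H c d d.+1].
Proof.
move=> c_neq0; elim: j x => [|j ih] x.
  case=> a ->; rewrite big_ord0 /gradf mulmx0 add0r => c0.
  by rewrite c0 eqxx in c_neq0.
move=> /kspanSP [u [a [ku ->]]]; rewrite gradfD -scalemxAr.
have [-> /eqP|a_neq0 grad0] := eqVneq a 0.
  rewrite scale0r addr0 => /eqP /(ih _ ku) [d [d1 dj stall]].
  by exists d; split => //; apply: leqW.
exists j.+1; split => //; apply: krylov_eq_of_kv.
have -> : kv j.+1 = - a^-1 *: gradf H c u.
  apply: (scalerI a_neq0); rewrite scalerA mulrN mulfV // scaleN1r.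
  by apply/eqP; rewrite -addr_eq0 addrC grad0.
exact/kspanZ/kspan_gradf.
Qed.

End KrylovSpan.

Lemma lin_coef_eq0_of_quad_ge0 (R : realFieldType) (s B : R) : 0 < B ->
  (forall t, 0 <= t * s + t ^+ 2 / 2 * B) -> s = 0.
Proof.
move=> B_gt0 quad_ge0; apply/eqP; rewrite -sqrf_eq0 eq_le sqr_ge0 andbT.
have := quad_ge0 (- s / B).
rewrite (_ : _ + _ = - (s ^+ 2 * (2 * B)^-1)); last by field; rewrite gt_eqF.
by rewrite oppr_ge0 pmulr_lle0 // invr_gt0 mulr_gt0.
Qed.

Section QuadraticObjective.
Variables (R : realFieldType) (n : nat) (H : 'M[R]_n) (c : 'cV[R]_n).
Hypothesis symH : H^T = H.
Hypothesis posH : forall v : 'cV[R]_n, v != 0 -> 0 < dotv v (H *m v).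

Local Notation f := (fobj H c).
Local Notation g := (gradf H c).

Lemma fobjDZ x v t :
  f (x + t *: v) = f x + t * dotv (g x) v + t ^+ 2 / 2 * dotv v (H *m v).
Proof.
rewrite /fobj /gradf mulmxDr -scalemxAr !dotvDl !dotvDr !dotvZl !dotvZr.
rewrite -(dotv_mulmx_sym _ _ symH) (dotv_mulmx_sym v x symH) (dotvC (H *m v)).
have two_neq0 : (2 : R) != 0 by rewrite pnatr_eq0.
by field.
Qed.

Lemma krylov_min_gradf_orth k x v :
  krylov_min H c k x -> kspan H c k v -> dotv (g x) v = 0.
Proof.
move=> [kx x_min] kv; have [->|v_neq0] := eqVneq v 0; first exact: dotv0r.
apply: (lin_coef_eq0_of_quad_ge0 (posH v_neq0)) => t.
have kxv : krylov H c k (x + t *: v).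
  by apply/krylovE/kspanD; [apply/krylovE | apply/kspanZ].
by have := x_min _ kxv; rewrite fobjDZ -addrA lerDl.
Qed.

Lemma gradfB x y : g x - g y = H *m (x - y).
Proof. by rewrite /gradf mulmxBr opprD addrACA subrr addr0. Qed.

Lemma eq_of_dotv_gradf x y : dotv (g x) (x - y) = dotv (g y) (x - y) -> x = y.
Proof.
move=> /eqP; rewrite -subr_eq0 -dotvBl gradfB dotvC => /eqP xy0.
apply/eqP; rewrite -subr_eq0; apply/negPn/negP => /posH.
by rewrite xy0 ltxx.
Qed.

Lemma gram_det_gt0 u v : dotv u v = 0 -> u != 0 -> v != 0 ->
  0 < dotv u (H *m u) * dotv v (H *m v) - dotv u (H *m v) ^+ 2.
Proof.
move=> uv0 u_neq0 v_neq0; have vHv_gt0 := posH v_neq0.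
pose w := dotv u (H *m v) *: v - dotv v (H *m v) *: u.
have w_neq0 : w != 0.
  apply/eqP => w0; have /eqP := congr1 (dotv u) w0.
  rewrite dotv0r /w dotvBr !dotvZr uv0 mulr0 sub0r oppr_eq0 mulf_eq0 (gt_eqF vHv_gt0).
  by move=> /eqP /dotvv_eq0 u0; rewrite u0 eqxx in u_neq0.
have := posH w_neq0; rewrite /w mulmxBr -!scalemxAr.
rewrite !dotvBl !dotvBr !dotvZl !dotvZr (dotvC v (H *m u)) -dotv_mulmx_sym //.
set a := dotv u (H *m u); set b := dotv v (H *m v); set d := dotv u (H *m v).
rewrite (_ : _ - _ = b * (a * b - d ^+ 2)); last by ring.
by rewrite pmulr_rgt0.
Qed.

End QuadraticObjective.

Section ConjugateDirectionStep.
Variables (R : realFieldType) (n : nat) (H : 'M[R]_n) (c : 'cV[R]_n).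
Hypothesis symH : H^T = H.
Hypothesis posH : forall v : 'cV[R]_n, v != 0 -> 0 < dotv v (H *m v).
Variables (m : nat) (xprev xcur xnext q : 'cV[R]_n).
Hypothesis min_prev : krylov_min H c m xprev.
Hypothesis min_cur : krylov_min H c m.+1 xcur.
Hypothesis min_next : krylov_min H c m.+2 xnext.
Hypothesis q_par : parallel q (xcur - xprev).
Hypothesis grad_neq0 : gradf H c xcur != 0.

Local Notation g := (gradf H c xcur).
Local Notation D :=
  (dotv g (H *m g) * dotv q (H *m q) - (dotv g (H *m q)) ^+ 2).

Lemma cg_dir_kspan : kspan H c m.+1 q.
Proof.
case: q_par => _ _ [t [_ ->]]; apply/kspanZ/kspanB.
- by apply/krylovE; case: min_cur.
- by apply/kspanS/krylovE; case: min_prev.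
Qed.

Lemma cg_grad_orth v : kspan H c m.+1 v -> dotv g v = 0.
Proof. exact: krylov_min_gradf_orth. Qed.

Lemma cg_mulmx_dir_orth v : kspan H c m v -> dotv (H *m q) v = 0.
Proof.
case: q_par => _ _ [t [_ ->]] kv; rewrite -scalemxAr -(gradfB H c) dotvZl dotvBl.
rewrite cg_grad_orth ?(krylov_min_gradf_orth _ _ min_prev) ?subrr ?mulr0 //.
exact: kspanS.
Qed.

Lemma cg_mulmx_grad_orth v : kspan H c m v -> dotv (H *m g) v = 0.
Proof. by move=> kv; rewrite -dotv_mulmx_sym // cg_grad_orth //; apply: kspan_mulmx. Qed.

Lemma cg_dir_notin : ~ kspan H c m q.
Proof.
case: q_par => q_neq0 _ _ /cg_mulmx_dir_orth; rewrite dotvC => qHq0.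
by have := posH q_neq0; rewrite qHq0 ltxx.
Qed.

Lemma cg_grad_notin : ~ kspan H c m.+1 g.
Proof. by move=> /cg_grad_orth /dotvv_eq0 g0; move: grad_neq0; rewrite g0 eqxx. Qed.

Lemma cg_denominator_gt0 : 0 < D.
Proof.
case: q_par => q_neq0 _ _.
exact: gram_det_gt0 (cg_grad_orth cg_dir_kspan) grad_neq0 q_neq0.
Qed.

Lemma cg_next_min :
  xnext = xcur + (- (dotv g g * dotv q (H *m q)) / D) *: g
               + ((dotv g g * dotv q (H *m g)) / D) *: q.
Proof.
set beta := _ / D; set gamma := _ / D; set y := _ + _ *: q.
have kcur : kspan H c m.+1 xcur by apply/krylovE; case: min_cur.
have ky : kspan H c m.+2 y.
  apply: kspanD; last by apply/kspanZ/kspanS; exact: cg_dir_kspan.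
  by apply: kspanD; [apply: kspanS | apply/kspanZ/kspan_gradf].
have grad_y : gradf H c y = g + beta *: (H *m g) + gamma *: (H *m q).
  by rewrite /y -addrA gradfD mulmxDr -!scalemxAr addrA.
have qHgC : dotv q (H *m g) = dotv g (H *m q) by rewrite dotv_mulmx_sym // dotvC.
have HqgC : dotv (H *m q) g = dotv g (H *m q) by rewrite dotvC.
have D_neq0 := gt_eqF cg_denominator_gt0.
have orth_y : forall w, kspan H c m.+2 w -> dotv (gradf H c y) w = 0.
  apply: (orth_kspanS (kspan_gradf kcur) cg_grad_notin).
  - apply: (orth_kspanS cg_dir_kspan cg_dir_notin) => [u ku|];
      rewrite grad_y 2!dotvDl !dotvZl.
      rewrite cg_grad_orth ?(cg_mulmx_grad_orth ku) ?(cg_mulmx_dir_orth ku).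
        by rewrite !mulr0 !addr0.
      exact: kspanS.
    rewrite (cg_grad_orth cg_dir_kspan) -[dotv (H *m g) q]dotv_mulmx_sym //.
    rewrite [dotv (H *m q) q]dotvC /beta /gamma qHgC.
    by field; rewrite D_neq0.
  - rewrite grad_y 2!dotvDl !dotvZl /beta /gamma qHgC HqgC.
    rewrite -[dotv (H *m g) g]dotv_mulmx_sym //.
    by field; rewrite D_neq0.
have kd : kspan H c m.+2 (xnext - y).
  by apply: kspanB => //; apply/krylovE; case: min_next.
apply: (@eq_of_dotv_gradf _ _ _ c posH).
by rewrite (krylov_min_gradf_orth symH posH min_next kd) (orth_y _ kd).
Qed.

End ConjugateDirectionStep.

Theorem mainTheorem1 (R : realFieldType) (n : nat) (H : 'M[R]_n) (c : 'cV[R]_n)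
  (r k : nat) (x xkm1 xk xk1 q : 'cV[R]_n) :
  H^T = H ->
  (forall v : 'cV[R]_n, v != 0 -> 0 < dotv v (H *m v)) ->
  c != 0 ->
  krylov_r H c r ->
  (1 <= k)%N -> (k <= r - 1)%N ->
  krylov_min H c k.-1 xkm1 ->
  krylov_min H c k xk ->
  krylov_min H c k.+1 xk1 ->
  krylov H c k x ->
  parallel q (xk - xkm1) ->
  let g := gradf H c xk in
  let D := dotv g (H *m g) * dotv q (H *m q) - (dotv g (H *m q)) ^+ 2 in
  let beta := - (dotv g g * dotv q (H *m q)) / D in
  let gamma := (dotv g g * dotv q (H *m g)) / D in
  D != 0 /\ xk1 - x = (xk - x) + beta *: g + gamma *: q.
Proof.
move=> symH posH c_neq0 [_ _ no_stall] k_gt0 k_le_r.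
case: k k_gt0 k_le_r => [//|m] _ m_lt_r min_prev min_cur min_next _ q_par /=.
have grad_neq0 : gradf H c xk != 0.
  have kxk : kspan H c m.+1 xk by apply/krylovE; case: min_cur.
  apply/eqP => /(krylov_eq_of_gradf_eq0 c_neq0 kxk) [d [d_gt0 d_le_m stall]].
  by apply: (no_stall d) => //; lia.
split; first exact/lt0r_neq0/(cg_denominator_gt0 symH posH min_prev min_cur q_par).
rewrite (cg_next_min symH posH min_prev min_cur min_next q_par grad_neq0).
by rewrite [LHS]addrAC [X in X + _ = _]addrAC.
Qed.
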